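(* Let $q$ be a prime power and $d\le n\le m$ integers, let $\tau=\lfloor (d-1)/2\rfloor+1$, and assume $d\le n-1$ when $d$ is odd. Then there exist a code $\mathcal C\subseteq\mathbb F_{q^m}^n$ with minimum rank distance at least $d$ and a word $\mathbf r\in\mathbb F_{q^m}^n$ such that $|\mathcal C\cap\mathcal B_\tau(\mathbf r)|\ge q^{n-\tau}$.
   Context: Fixing a basis of $\mathbb F_{q^m}$ over $\mathbb F_q$, each vector in $\mathbb F_{q^m}^n$ is identified with an $m\times n$ matrix over $\mathbb F_q$; $\mathrm{rk}$ denotes its rank. The minimum rank distance of $\mathcal C$ is $\min\{\mathrm{rk}(\mathbf c_1-\mathbf c_2):\mathbf c_1\ne\mathbf c_2\in\mathcal C\}$, and $\mathcal B_\tau(\mathbf r)=\{\mathbf x:\mathrm{rk}(\mathbf x-\mathbf r)\le\tau\}$. Codes need not be linear. *)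

From HB Require Import structures.
From mathcomp Require Import all_boot all_order all_algebra all_field.
Set Implicit Arguments. Unset Strict Implicit. Unset Printing Implicit Defensive.
Import GRing.Theory.
Local Open Scope ring_scope.

(* Vectors of F_{q^m}^n are identified (via a fixed F_q-basis of F_{q^m})
   with m x n matrices over F = F_q; rk is the matrix rank over F_q. *)

Definition min_rank_dist_ge (F : finFieldType) (m n : nat)
  (C : {set 'M[F]_(m, n)}) (d : nat) : Prop :=
  forall c1 c2, c1 \in C -> c2 \in C -> c1 != c2 -> leq d (\rank (c1 - c2)%R).

Definition rk_ball (F : finFieldType) (m n : nat) (tau : nat)
  (r : 'M[F]_(m, n)) : {set 'M[F]_(m, n)} :=
  [set x | leq (\rank (x - r)%R) tau].

(* Put [tau] as in the statement and [k := n - tau]. Multiplication by the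
   elements of a degree-[k] extension of [F], restricted to [tau] basis vectors,
   gives [q ^ k] matrices [A_u] of size [tau x k] whose pairwise differences all
   have rank [tau]. Their lifts [[1; A_u^T; 0] *m [1, A_u]] have rank at most
   [tau], so they all lie in the ball of radius [tau] around [0]; the difference
   of two lifts contains [A_u - A_v] and its transpose in disjoint row and
   column blocks, so it has rank at least [2 tau >= d]. *)

From HB Require Import structures.
From mathcomp Require Import all_boot all_order all_algebra all_field.
From mathcomp Require Import zify.
Set Implicit Arguments. Unset Strict Implicit. Unset Printing Implicit Defensive.
Import GRing.Theory passmx.
Local Open Scope ring_scope.

Lemma natr_card_finField (F : finFieldType) : #|F|%:R = 0 :> F.
Proof.
have [p pr_p pcharFp] := finPcharP F.
have card_gt1 := finNzRing_gt1 F.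
rewrite (card_pprimeChar pcharFp) in card_gt1 *.
by rewrite natrX (pcharf0 pcharFp) expr0n; case: logn card_gt1.
Qed.

Lemma dim_splitting_field_Xq_X (F : finFieldType) (L : splittingFieldType F) k
    (m := (#|F| ^ k)%N) :
  (0 < k)%N -> splittingFieldFor 1 (map_poly (in_alg L) ('X^m - 'X)) {:L} ->
  \dim {:L} = k.
Proof.
move=> k_gt0; rewrite rmorphB rmorphXn /= map_polyX => -[zs DqL defL].
have m_gt1: (1 < m)%N by rewrite (ltn_exp2l 0) ?finNzRing_gt1.
have Dq: 'X^m - 'X = ('X^(m.-1) - 1) * ('X - 0) :> {poly L}.
  by rewrite subr0 mulrBl mul1r -exprSr prednK // ltnW.
have Uzs: uniq zs.
  rewrite -separable_prod_XsubC -(eqp_separable DqL) Dq separable_root andbC.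
  have m1_gt0: (0 < m.-1)%N by rewrite -ltnS prednK // ltnW.
  rewrite /root !hornerE subr_eq0 eq_sym expr0n (gtn_eqF m1_gt0) oner_eq0 /=.
  rewrite cyclotomic.separable_Xn_sub_1 // -subn1 natrB; last exact: ltnW.
  have card0: #|F|%:R = 0 :> L.
    by rewrite -(scaler_nat (R := F)) natr_card_finField scale0r.
  by rewrite subr_eq0 natrX card0 expr0n gtn_eqF // eq_sym oner_eq0.
(* Every element of [L] is a root: the roots form the subfield fixed by the
   [k]-th power of the Frobenius automorphism, and they generate [L]. *)
have [frob _ Dfrob] := finField_galois_generator (sub1v {:L}).
rewrite dimv1 expn1 in Dfrob.
have in_zs: zs =i fixedSpace (frob ^+ k)%g.
  move=> z; rewrite -root_prod_XsubC -(eqp_root DqL) (sameP fixedSpaceP eqP).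
  rewrite /root !hornerE subr_eq0 /m; congr (_ == z).
  elim: (k) => [|i IHi]; first by rewrite gal_id.
  by rewrite expgSr expnSr exprM IHi galM ?Dfrob ?memvf.
have all_roots (z : L) : z \in zs.
  suff fixed_full: fixedSpace (frob ^+ k)%g = {:L}%VS.
    by rewrite in_zs fixed_full memvf.
  apply/eqP; rewrite eqEsubv subvf -defL -[fixedSpace _]subfield_closed agenvS //.
  by rewrite subv_add sub1v; apply/span_subvP=> y; rewrite in_zs.
have card_roots: #|FinFieldExtType L| = m.
  have /eq_card->: FinFieldExtType L =i zs by move=> z; rewrite all_roots.
  apply: succn_inj; rewrite (card_uniqP _) //= -(size_prod_XsubC _ id).
  by rewrite -(eqp_size DqL) size_polyDl size_polyXn // size_polyN size_polyX.
apply/eqP; rewrite -(eqn_exp2l _ _ (finNzRing_gt1 F)) -/m -card_roots.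
rewrite -(@card_vspace F (finvect_type L) _ fullv).
by apply/eqP/eq_card => x; rewrite memvf.
Qed.

Lemma finField_ext_exists (F : finFieldType) k :
  (0 < k)%N -> exists L : fieldExtType F, \dim {:L} = k.
Proof.
move=> k_gt0; set m := (#|F| ^ k)%N.
have nz_q: 'X^m - 'X != 0 :> {poly F}.
  by rewrite -size_poly_eq0 size_polyDl ?size_polyXn // size_polyN size_polyX ltnS
     (ltn_exp2l 0) ?finNzRing_gt1.
have [L splitL] := FinSplittingFieldFor nz_q.
by exists L; apply: dim_splitting_field_Xq_X.
Qed.

Lemma free_prefix_coef0 (F : fieldType) (vT : vectType F) n t (e : n.-tuple vT) :
  free e -> (t <= n)%N -> forall v : 'rV[F]_t,
  \sum_(i < t) v 0 i *: e`_i = 0 -> v = 0.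
Proof.
move=> /freeP free_e; case: t => [_ v _ | t le_tn v sum0]; first exact: thinmx0.
pose w (j : 'I_n) := if (j < t.+1)%N then v 0 (inord j) else 0.
have w_sum0: \sum_(j < n) w j *: e`_j = 0.
  transitivity (\sum_(i < t.+1) v 0 (inord i) *: e`_i).
    rewrite (big_ord_widen n (fun j => v 0 (inord j) *: e`_j) le_tn) [RHS]big_mkcond.
    by apply: eq_bigr => j _; rewrite /w; case: ifP => // _; rewrite scale0r.
  by rewrite -[RHS]sum0; apply: eq_bigr => i _; rewrite inord_val.
apply/rowP => i; have := free_e w w_sum0 (widen_ord le_tn i).
by rewrite /w /= ltn_ord inord_val mxE.
Qed.

Section MultiplicationCode.
Variables (F : fieldType) (L : fieldExtType F).
Local Notation n := (\dim {:L}).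
Let e := vbasis {:L}.

(* Row [i] holds the coordinates of [x * e_i], where [x] has coordinates [u]:
   multiplication by [x] restricted to the first [t] basis vectors, which is
   injective when [x != 0]. *)
Definition mrd_mx t (u : 'rV[F]_n) : 'M[F]_(t, n) :=
  \matrix_(i < t) rVof e (vecof e u * e`_i).

Lemma mrd_mxB t u v : mrd_mx t (u - v) = mrd_mx t u - mrd_mx t v.
Proof.
by apply/row_matrixP => i; rewrite linearB /= !rowK raddfB mulrBl raddfB.
Qed.

Lemma rank_mrd_mx t u : (t <= n)%N -> u != 0 -> \rank (mrd_mx t u) = t.
Proof.
move=> le_tn nz_u; have e_basis: basis_of {:L} e := vbasisP {:L}.
apply/eqP/inj_row_free => y y_ker.
apply: (free_prefix_coef0 (basis_free e_basis) le_tn).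
have: rVof e (vecof e u * \sum_(i < t) y 0 i *: e`_i) = 0.
  rewrite -[RHS]y_ker mulmx_sum_row mulr_sumr linear_sum; apply: eq_bigr => i _.
  by rewrite rowK -scalerAr linearZ.
move/eqP; rewrite (rVof_eq0 e_basis) mulf_eq0 (vecof_eq0 e_basis).
by rewrite (negbTE nz_u) => /eqP.
Qed.

End MultiplicationCode.

Section LiftedCode.
Variables (F : fieldType) (t k r : nat).

Definition lift_mx (A : 'M[F]_(t, k)) : 'M[F]_(t + (k + r), t + k) :=
  col_mx 1%:M (col_mx A^T 0) *m row_mx 1%:M A.

Lemma rank_lift_mx (A : 'M[F]_(t, k)) : (\rank (lift_mx A) <= t)%N.
Proof. exact: leq_trans (mxrankM_maxr _ _) (rank_leq_row _). Qed.

Lemma lift_mxB (A B : 'M[F]_(t, k)) : lift_mx A - lift_mx B =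
  col_mx (row_mx 0 (A - B)) (col_mx (row_mx (A - B)^T (A^T *m A - B^T *m B)) 0).
Proof.
rewrite /lift_mx !mul_col_mx !mul_mx_row !mul1mx !mul0mx !opp_col_mx !add_col_mx.
by rewrite !opp_row_mx !add_row_mx subrr linearB /= subrr !mulmx1 subr0 row_mx0.
Qed.

Lemma double_rank_le_block (D : 'M[F]_(t, k)) (X : 'M[F]_k) :
  (\rank D + \rank D <=
   \rank (col_mx (row_mx 0 D) (col_mx (row_mx D^T X) (0 : 'M_(r, t + k)))))%N.
Proof.
(* Rank-nullity for the projection [P] onto the first [t] columns: the image
   keeps the block [D^T], and the kernel contains the rows [row_mx 0 D]. *)
set Y := col_mx _ _; pose P : 'M[F]_(t + k, t) := col_mx 1%:M 0.
rewrite -(mxrank_mul_ker Y P); apply: leq_add.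
  rewrite /Y /P !mul_col_mx !mul_row_col !mulmx0 !mulmx1 !addr0 mul0mx.
  by rewrite rank_col_0mx rank_col_mx0 mxrank_tr.
rewrite -(@rank_row_0mx F t k t D); apply: mxrankS.
rewrite sub_capmx; apply/andP; split.
  by rewrite /Y -addsmxE addsmxSl.
by apply/sub_kermxP; rewrite /P mul_row_col mulmx0 mul0mx addr0.
Qed.

Lemma rank_lift_mxB (A B : 'M[F]_(t, k)) :
  (\rank (A - B)%R + \rank (A - B)%R <= \rank (lift_mx A - lift_mx B)%R)%N.
Proof. by rewrite lift_mxB double_rank_le_block. Qed.

End LiftedCode.

Lemma mrd_code_exists (F : finFieldType) t k : (0 < k)%N -> (t <= k)%N ->
  exists f : 'rV[F]_k -> 'M[F]_(t, k),
    forall u v, u != v -> \rank (f u - f v) = t.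
Proof.
move=> k_gt0 le_tk; have [L dimL] := finField_ext_exists F k_gt0; subst k.
exists (mrd_mx t) => u v neq_uv.
by rewrite -mrd_mxB rank_mrd_mx // subr_eq0.
Qed.

Lemma code_in_ball_exists (F : finFieldType) t k r d :
  (0 < t)%N -> (t <= k)%N -> (d <= t + t)%N ->
  exists (C : {set 'M[F]_(t + (k + r), t + k)}) (r0 : 'M[F]_(t + (k + r), t + k)),
    min_rank_dist_ge C d /\ (#|F| ^ k <= #|C :&: rk_ball t r0|)%N.
Proof.
move=> t_gt0 le_tk le_d2t.
have [f rank_fB] := mrd_code_exists F (leq_trans t_gt0 le_tk) le_tk.
pose c u := lift_mx r (f u).
have rank_cB u v : u != v -> (t + t <= \rank (c u - c v)%R)%N.
  by move=> /rank_fB {1 2}<-; apply: rank_lift_mxB.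
have c_inj : injective c.
  move=> u v eq_cuv; apply/eqP; apply: contraT => /rank_cB.
  by rewrite eq_cuv subrr mxrank0 leqNgt addn_gt0 t_gt0.
exists [set c u | u : 'rV[F]_k], 0; split.
  move=> _ _ /imsetP[u _ ->] /imsetP[v _ ->] neq_cuv.
  by apply: leq_trans le_d2t (rank_cB u v _); apply: contra neq_cuv => /eqP ->.
rewrite (setIidPl _) ?card_imset // ?card_mx ?mul1n //.
by apply/subsetP => _ /imsetP[u _ ->]; rewrite inE subr0 rank_lift_mx.
Qed.

Lemma double_radius_bounds d n :
  (0 < d)%N -> (d <= n)%N -> (odd d -> (d <= n - 1)%N) ->
  let tau := ((d - 1)./2 + 1)%N in (d <= tau + tau)%N /\ (tau + tau <= n)%N.
Proof.
move=> d_gt0 le_dn le_dn1 tau; have := odd_double_half (d - 1).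
rewrite oddB // /= -addnn /tau; case: (odd d) le_dn1 => /= [/(_ isT)|_]; lia.
Qed.

Theorem corollary2 (F : finFieldType) (m n d : nat) :
  (0 < d)%N -> (d <= n)%N -> (n <= m)%N ->
  (odd d -> (d <= n - 1)%N) ->
  let q := #|F| in
  let tau := ((d - 1)./2 + 1)%N in
  exists (C : {set 'M[F]_(m, n)}) (r : 'M[F]_(m, n)),
    min_rank_dist_ge C d /\
    (q ^ (n - tau) <= #|C :&: rk_ball tau r|)%N.
Proof.
move=> d_gt0 le_dn le_nm le_dn1 q tau.
have [le_d2tau le_2tau_n] : (d <= tau + tau)%N /\ (tau + tau <= n)%N :=
  double_radius_bounds d_gt0 le_dn le_dn1.
have tau_gt0 : (0 < tau)%N by rewrite /tau addn1.
clearbody tau; have ->: n = (tau + (n - tau))%N by lia.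
have ->: m = (tau + ((n - tau) + (m - n)))%N by lia.
by rewrite addKn; apply: code_in_ball_exists => //; lia.
Qed.
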